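(* Let $X$ be an $n$-globular set and let $y\in T_n^{D^s}(T_n^{D^s}(X))$ be an element whose underlying diagram is a block $B$ and whose minimal labels $D_1,\dots,D_\ell\in T_n^{D^s}(X)$ are nontrivial with $M(D_j)<m(B)$ for all $j$. Then $H(D_j)=H(\mu_X(y))-1$ for all $j$.
   Context: An $n$-globular set $X$: sets $X_0,\dots,X_n$ and maps $s,t\colon X_k\to X_{k-1}$ with $ss=st$, $ts=tt$. $\langle\ell\rangle=\{1<\dots<\ell\}$. A simple $k$-string diagram $D$: numbers $\ell_0=1,\ell_1,\dots,\ell_k\ge0$ and arbitrary functions $v^m\colon\langle\ell_m\rangle\to\langle\ell_{m-1}\rangle$; its source and target are both $(v^1,\dots,v^{k-1})$. An $X$-labelling of $D$: elements $x^m_i\in X_m$ ($0\le m\le k$, $1\le i\le\ell_m$) such that for $m\ge1$, $s(x^m_i)=x^{m-1}_{v^m(i)}$ if $i=\min\{j:v^m(j)=v^m(i)\}$ and otherwise $s(x^m_i)=t(x^m_p)$ with $p=\max\{j<i:v^m(j)=v^m(i)\}$. The source of $(D,x)$ is $(s(D),(x^m_i)_{m\le k-1})$; its target is the same except that for $i\in\mathrm{im}(v^k)$ the label $x^{k-1}_i$ is replaced by $t(x^k_p)$, $p=\max\{j:v^k(j)=i\}$. $T_n^{D^s}(X)_k$ is the set of $X$-labelled simple $k$-string diagrams, an $n$-globular set with these source/target maps. The multiplication $\mu_X\colon T_n^{D^s}(T_n^{D^s}(X))\to T_n^{D^s}(X)$: if a $k$-diagram $D$ is labelled by labelled $m$-diagrams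 $E^m_i$ with underlying diagrams $D^m_i$ (compatibility forces $\ell_j(D^m_i)=\ell_j(D^{m-1}_{v^m(i)})$, $v^j(D^m_i)=v^j(D^{m-1}_{v^m(i)})$ for $j<m$), the composite has level-$m$ set $\coprod_{i=1}^{\ell_m}\langle\ell_m(D^m_i)\rangle$, ordered by component index first and then internally, with map to level $m-1$ sending $a$ in component $i$ to $v^m(D^m_i)(a)$ in component $v^m(i)$, and with $a$ in component $i$ at level $m$ labelled by the $m$-dimensional label at $a$ of $E^m_i$. All notions below for labelled diagrams refer to the underlying diagram. $H(D)=|\{i:\ell_i(D)>1\}|$. $D$ is nondegenerate if $\ell_i(D)>0$ for all $1\le i\le k$, nontrivial if moreover $\ell_i(D)>1$ for some $i$. For nontrivial $D$: $m(D)=\min\{j:\ell_j(D)>1\}$, $M(D)=\max\{j:\ell_j(D)>1\}$. A block is a nontrivial $D$ with $m(D)=M(D)$; the blocks are $B^k(i,\ell,p)$ ($1\le i<k$, $\ell>1$, $1\le p\le\ell$: $\ell_i=\ell$, $\ell_j=1$ for $j\neq i$, $v^{i+1}=(p)$, other maps constant) and $B^k(k,\ell)$ ($\ell>1$: $\ell_k=\ell$, $\ell_j=1$ for $j<k$). The minimal labels of a labelled block are $x_1,\dots,x_\ell$ where, for $B^k(i,\ell,p)$, $x_j=x^i_j$ ($j\ne p$) and $x_p=x^k_1$, and for $B^k(k,\ell)$, $x_j=x^k_j$; they determine the labelling. *)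

From mathcomp Require Import all_boot.
Set Implicit Arguments. Unset Strict Implicit. Unset Printing Implicit Defensive.

(* An n-globular set is the restriction to levels 0..n. *)
Record preglob := PreGlob {
  cell : nat -> Type;
  gsrc : forall k, cell k.+1 -> cell k;
  gtgt : forall k, cell k.+1 -> cell k }.

Definition globular (X : preglob) : Prop :=
  forall k (x : cell X k.+2),
    @gsrc X k (@gsrc X k.+1 x) = @gsrc X k (@gtgt X k.+1 x) /\
    @gtgt X k (@gsrc X k.+1 x) = @gtgt X k (@gtgt X k.+1 x).

(* A (raw) labelled simple string diagram.  [dg] lists the levels 1..k:
   level m is the sequence (v^m(1),...,v^m(l_m)), all indices 0-based
   (element i of <l> is stored as i-1).  [lab m] is the sequence of labels
   x^m_1,...,x^m_{l_m}. *)
Record ldiag (X : preglob) := LDiag {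
  dg : seq (seq nat);
  lab : forall m, seq (cell X m) }.

Section Diagrams.
Variable X : preglob.
Implicit Types d : ldiag X.

Definition dimd d := size (dg d).
Definition ell d m := if m is m'.+1 then size (nth [::] (dg d) m') else 1.
Definition lev d m : seq nat := nth [::] (dg d) m.-1.
Definition vmap d m i := nth 0 (lev d m) i.

(* p = max{q < i : v^{m}(q) = v^{m}(i)}, meaningful when that set is nonempty *)
Definition prev_same d m i := \max_(q < i | vmap d m q == vmap d m i) (q : nat).
Definition has_prev d m i := has (fun q => vmap d m q == vmap d m i) (iota 0 i).

Definition valid (k : nat) d : Prop :=
  [/\ dimd d = k,
      (forall m i, 0 < m <= k -> i < ell d m -> vmap d m i < ell d m.-1),
      (forall m, size (lab d m) = (if m <= k then ell d m else 0)) &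
      (forall m i, m < k -> i < ell d m.+1 ->
         if has_prev d m.+1 i then
           omap (@gsrc X m) (onth (lab d m.+1) i)
             = omap (@gtgt X m) (onth (lab d m.+1) (prev_same d m.+1 i))
         else
           omap (@gsrc X m) (onth (lab d m.+1) i)
             = onth (lab d m) (vmap d m.+1 i))].

Definition lsrc (k : nat) d : ldiag X :=
  LDiag (take k (dg d)) (fun m => if m <= k then lab d m else [::]).

(* labels at level m of the target of a labelled (m+1)-diagram: x^m_i is
   replaced by t(x^{m+1}_p), p = max{q : v^{m+1}(q) = i}, if i is in the image *)
Definition retarget (m : nat) d : seq (cell X m) :=
  map (fun ix : nat * cell X m =>
         let qs := [seq q <- iota 0 (ell d m.+1) | vmap d m.+1 q == ix.1] in
         if qs is q0 :: _ then
           match onth (lab d m.+1) (last q0 qs) with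
           | Some z => @gtgt X m z
           | None => ix.2
           end
         else ix.2)
      (zip (iota 0 (size (lab d m))) (lab d m)).

Definition ltgt (k : nat) d : ldiag X :=
  LDiag (take k (dg d))
        (fun m => if m < k then lab d m else if m == k then retarget m d else [::]).

Definition H d := count (fun s => 1 < size s) (dg d).
Definition nondegenerate d := all (fun s => 0 < size s) (dg d).
Definition nontrivial d := nondegenerate d && has (fun s => 1 < size s) (dg d).
(* m(D), M(D) (1-based level numbers), meaningful for nontrivial D *)
Definition mD d := (find (fun s => 1 < size s) (dg d)).+1.
Definition MD d := \max_(i < dimd d | 1 < ell d i.+1) (i.+1 : nat).
Definition is_block d := nontrivial d && (mD d == MD d).

End Diagrams.

(* T_n^{D^s}(X) as a (pre)globular set (raw labelled diagrams; validity is
   imposed separately). *)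
Definition TX (X : preglob) : preglob :=
  @PreGlob (fun _ => ldiag X) (fun k => @lsrc X k) (fun k => @ltgt X k).

Definition dflt (X : preglob) : ldiag X := @LDiag X [::] (fun _ => [::]).

Section Mult.
Variable X : preglob.
Implicit Types y : ldiag (TX X).

Definition E y m i : ldiag X := nth (dflt X) (lab y m) i.

Definition validTT (k : nat) y : Prop :=
  valid k y /\ (forall m i, m <= k -> i < ell y m -> valid m (E y m i)).

(* position of the first element of component c at level m of the composite *)
Definition offset y m c := sumn [seq ell (E y m i) m | i <- iota 0 c].

Definition mu_dg y : seq (seq nat) :=
  [seq flatten [seq [seq offset y m.-1 (vmap y m i) + a | a <- lev (E y m i) m]
               | i <- iota 0 (ell y m)]
  | m <- iota 1 (dimd y)].

Definition mu_lab y m : seq (cell X m) :=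
  flatten [seq lab (E y m i) m | i <- iota 0 (ell y m)].

Definition mu y : ldiag X := LDiag (mu_dg y) (mu_lab y).

(* minimal labels x_{j+1} (0-based j) of a labelled block y *)
Definition min_label y j : ldiag X :=
  let i := mD y in let k := dimd y in
  if i < k then (if j == vmap y i.+1 0 then E y k 0 else E y i j)
  else E y k j.

End Mult.

From mathcomp Require Import all_boot.
Set Implicit Arguments. Unset Strict Implicit. Unset Printing Implicit Defensive.

(* The labelling condition makes the labels compatible along sources: the
   level-r truncation of any label E^m_c is itself a label at level r.  Below
   i = m(B) the block B has a single cell per level, so every minimal label
   D_j, and likewise mu(y), has at such a level r the shape of the unique
   label E^r_1.  From level i on, each D_j has one cell per level because
   M(D_j) < i; in mu(y), level i collects one cell from each of the l > 1
   labels at level i (each of them a D_j or a truncation of one), while the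
   levels above i again have a single cell.  Hence mu(y) has exactly one
   more level of width > 1 than each D_j. *)

Section DiagramShape.
Variable X : preglob.
Implicit Types d : ldiag X.

Lemma ell_take d d' m r : take m (dg d) = dg d' -> r <= m -> ell d r = ell d' r.
Proof. by move=> e; case: r => [|r] //= hr; rewrite -e nth_take. Qed.

Lemma H_count_ell d : H d = count (fun r => 1 < ell d r) (iota 1 (dimd d)).
Proof.
rewrite /H -{1}(mkseq_nth [::] (dg d)) /mkseq count_map.
by rewrite (iotaDl 1 0) count_map.
Qed.

Lemma H_count_ell_le d a :
  a <= dimd d -> (forall r, a < r <= dimd d -> ell d r <= 1) ->
  H d = count (fun r => 1 < ell d r) (iota 1 a).
Proof.
move=> ha hle; rewrite H_count_ell -(subnKC ha) iotaD count_cat.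
rewrite -[RHS]addn0; congr (_ + _); apply/eqP; rewrite eqn0Ngt -has_count.
apply/hasPn => r; rewrite mem_iota -addnA subnKC // add1n ltnS -leqNgt.
exact: hle.
Qed.

Lemma ell_pos d r : nondegenerate d -> 0 < r <= dimd d -> 0 < ell d r.
Proof. by case: r => [|r] // /all_nthP nd /andP[_ hr]; apply: nd. Qed.

Lemma mD_le_dimd d : nontrivial d -> mD d <= dimd d.
Proof. by case/andP=> _; rewrite has_find. Qed.

Lemma ell_mD_gt1 d : nontrivial d -> 1 < ell d (mD d).
Proof. by case/andP=> _ /(nth_find [::]). Qed.

Lemma ell_lt_mD d r : r < mD d -> ell d r <= 1.
Proof. by case: r => [|r] //= /(before_find [::]) /negbT; rewrite -leqNgt. Qed.

Lemma leq_MD d r : 0 < r <= dimd d -> 1 < ell d r -> r <= MD d.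
Proof.
case: r => [|r] // /andP[_ hr] h1.
exact: (@leq_bigmax_cond _ (fun i : 'I_(dimd d) => 1 < ell d i.+1)
          (fun i => (i : nat).+1) (Ordinal hr) h1).
Qed.

Lemma ell_gt_MD d r : MD d < r -> ell d r <= 1.
Proof.
move=> hM; case: r hM => [|r] // hM; case: (ltnP r (dimd d)) => hr.
  rewrite leqNgt; apply/negP => /(@leq_MD d r.+1 hr) /(leq_trans hM).
  by rewrite ltnn.
by rewrite /= nth_default.
Qed.

Lemma ell_gt_MD_eq1 d r :
  nondegenerate d -> MD d < r <= dimd d -> ell d r = 1.
Proof.
move=> nd /andP[hM hr]; apply/eqP; rewrite eqn_leq ell_gt_MD // ell_pos //.
by rewrite hr (leq_ltn_trans _ hM).
Qed.

Lemma ell_block d r :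
  is_block d -> 0 < r <= dimd d -> r != mD d -> ell d r = 1.
Proof.
case/andP=> /andP[nd _] /eqP hmM hr nr.
apply/eqP; rewrite eqn_leq ell_pos // andbT.
case: (ltngtP r (mD d)) nr => // [/ell_lt_mD //|].
by rewrite hmM => /ell_gt_MD.
Qed.

Lemma prev_same_lt d m i : has_prev d m i -> prev_same d m i < i.
Proof.
case: i => [|i] //= _; rewrite ltnS /prev_same.
by apply/bigmax_leqP => q _; rewrite -ltnS ltn_ord.
Qed.

Lemma vmap_prev_same d m i :
  has_prev d m i -> vmap d m (prev_same d m i) = vmap d m i.
Proof.
case/hasP=> q; rewrite mem_iota => /andP[_ hq] hPq.
rewrite /prev_same (bigmax_eq_arg (Ordinal hq)) //.
by case: arg_maxnP => // j /eqP.
Qed.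

End DiagramShape.

Lemma dimd_mu X (y : ldiag (TX X)) : dimd (mu y) = dimd y.
Proof. by rewrite /dimd /= /mu_dg size_map size_iota. Qed.

Lemma ell_mu X (y : ldiag (TX X)) m : 0 < m <= dimd y ->
  ell (mu y) m = sumn [seq ell (E y m i) m | i <- iota 0 (ell y m)].
Proof.
case: m => [|m] // /andP[_ hm].
rewrite /= /mu_dg (nth_map 0) ?size_iota // nth_iota //.
rewrite size_flatten /shape -map_comp.
by congr sumn; apply: eq_map => i /=; rewrite size_map.
Qed.

Section Labels.
Variables (X : preglob) (k : nat) (y : ldiag (TX X)).
Hypothesis yTT : validTT k y.

Lemma onth_lab m c : m <= k -> c < ell y m -> onth (lab y m) c = Some (E y m c).
Proof.
case: yTT => -[_ _ hs _] _ hm hc.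
by rewrite onthE (nth_map (dflt X)) // hs hm.
Qed.

Lemma dimd_label m c : m <= k -> c < ell y m -> dimd (E y m c) = m.
Proof. by case: yTT => _ hE hm /(hE _ _ hm) []. Qed.

Lemma take_dg_label m c : m < k -> c < ell y m.+1 ->
  take m (dg (E y m.+1 c)) = dg (E y m (vmap y m.+1 c)).
Proof.
(* The source of E^{m+1}_c is either E^m_{v(c)} or the target of the previous
   label over the same cell, and sources and targets share their shape. *)
case: yTT => -[_ hv _ hl] _ hm; elim/ltn_ind: c => c IH hc.
have := hl m c hm hc; rewrite onth_lab //; case: ifP => [hp|_].
- have hpc := prev_same_lt hp.
  rewrite onth_lab ?(ltn_trans hpc hc) //= => -[-> _].
  by rewrite IH ?(ltn_trans hpc hc) ?vmap_prev_same.
- by rewrite onth_lab ?(ltnW hm) ?hv //= => -[/(congr1 (@dg X))].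
Qed.

Lemma vmap_lt_ell m c : m < k -> c < ell y m.+1 -> vmap y m.+1 c < ell y m.
Proof. by case: yTT => -[_ hv _ _] _ hm; apply: hv. Qed.

Lemma label_truncation r m c : r <= m -> m <= k -> c < ell y m ->
  exists2 c', c' < ell y r & take r (dg (E y m c)) = dg (E y r c').
Proof.
move=> /subnK <-; elim: (m - r) c => [|n IH] c hmk hc.
  by exists c; rewrite // take_oversize // -/(dimd _) dimd_label.
rewrite addSn in hmk hc *.
have [c' hc' e] := IH _ (ltnW hmk) (vmap_lt_ell hmk hc).
by exists c'; rewrite // -e -take_dg_label // take_takel ?leq_addl.
Qed.

End Labels.

Section BlockLabels.
Variables (X : preglob) (k : nat) (y : ldiag (TX X)).
Hypotheses (yTT : validTT k y) (y_block : is_block y).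
Hypothesis min_label_small : forall j, j < ell y (mD y) ->
  nontrivial (min_label y j) /\ MD (min_label y j) < mD y.

Lemma dimd_block : dimd y = k.
Proof. by case: yTT => -[]. Qed.

Lemma mD_le_k : mD y <= k.
Proof. by rewrite -dimd_block mD_le_dimd //; case/andP: y_block. Qed.

Lemma ell_block_gt1 : 1 < ell y (mD y).
Proof. by apply: ell_mD_gt1; case/andP: y_block. Qed.

Lemma ell_block_eq1 q : 0 < q <= k -> q != mD y -> ell y q = 1.
Proof. by rewrite -dimd_block; apply: ell_block. Qed.

Lemma ell_min_label_ge_mD j r : j < ell y (mD y) ->
  mD y <= r <= dimd (min_label y j) -> ell (min_label y j) r = 1.
Proof.
move=> /min_label_small [/andP[nd _] hM] /andP[hr hrd].
by apply: ell_gt_MD_eq1; rewrite // hrd (leq_trans hM).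
Qed.

Lemma min_label_top : mD y < k -> min_label y (vmap y (mD y).+1 0) = E y k 0.
Proof. by rewrite /min_label dimd_block => ->; rewrite eqxx. Qed.

Lemma min_label_mD c : ~~ ((mD y < k) && (c == vmap y (mD y).+1 0)) ->
  min_label y c = E y (mD y) c.
Proof.
rewrite /min_label dimd_block; case: ltnP => [_ /= /negbTE -> //|hk _].
by have -> : mD y = k by apply/eqP; rewrite eqn_leq mD_le_k.
Qed.

Lemma ell_block_gt_mD q : mD y < q <= k -> ell y q = 1.
Proof.
case/andP=> hq hqk; apply: ell_block_eq1; last by rewrite gtn_eqF.
by rewrite hqk (leq_ltn_trans _ hq).
Qed.

Lemma vmap_top_lt : mD y < k -> vmap y (mD y).+1 0 < ell y (mD y).
Proof.
by move=> hk; apply: (vmap_lt_ell yTT) => //; rewrite ell_block_gt_mD ?ltnSn.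
Qed.

Lemma min_label_is_label j : j < ell y (mD y) ->
  exists m c, [/\ mD y <= m <= k, c < ell y m & min_label y j = E y m c].
Proof.
move=> hj; case: (boolP ((mD y < k) && (j == vmap y (mD y).+1 0))).
  case/andP=> hk /eqP->; exists k, 0.
  by rewrite min_label_top // ltnW //= leqnn ell_block_gt_mD // hk leqnn.
by move=> hj'; exists (mD y), j; rewrite min_label_mD // leqnn mD_le_k.
Qed.

Lemma take_dg_top_label r :
  mD y < r <= k -> take r (dg (E y k 0)) = dg (E y r 0).
Proof.
move=> /andP[hr hk].
have hk0 : 0 < ell y k by rewrite ell_block_gt_mD // (leq_trans hr hk) leqnn.
have [[|c'] + ->] // := label_truncation yTT hk (leqnn k) hk0.
by rewrite ell_block_gt_mD ?hr.
Qed.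

Lemma ell_label_gt_mD r : mD y < r <= k -> ell (E y r 0) r = 1.
Proof.
move=> hr; have hk : mD y < k by case/andP: hr => /leq_trans; apply.
rewrite -(ell_take (take_dg_top_label hr)) // -min_label_top //.
apply: ell_min_label_ge_mD; first exact: vmap_top_lt.
rewrite min_label_top // (dimd_label yTT) ?ell_block_gt_mD ?hk ?leqnn //.
by case/andP: hr => /ltnW -> ->.
Qed.

Lemma ell_label_mD c : c < ell y (mD y) -> ell (E y (mD y) c) (mD y) = 1.
Proof.
move=> hc; case: (boolP ((mD y < k) && (c == vmap y (mD y).+1 0))); last first.
  move=> hc'; rewrite -min_label_mD //; apply: ell_min_label_ge_mD => //.
  by rewrite min_label_mD // (dimd_label yTT) ?mD_le_k // leqnn.
case/andP=> hk /eqP->.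
have e : take (mD y) (dg (E y k 0)) = dg (E y (mD y) (vmap y (mD y).+1 0)).
  rewrite -(take_takel _ (leqnSn (mD y))) take_dg_top_label ?ltnSn //.
  by rewrite (take_dg_label yTT) // ell_block_gt_mD ?ltnSn.
rewrite -(ell_take e) // -min_label_top //; apply: ell_min_label_ge_mD.
  exact: vmap_top_lt.
rewrite leqnn min_label_top // (dimd_label yTT) ?ell_block_gt_mD ?hk ?leqnn //.
exact: ltnW.
Qed.

Lemma ell_min_label_lt_mD j r : j < ell y (mD y) -> r < mD y ->
  ell (min_label y j) r = ell (E y r 0) r.
Proof.
case: r => [|r] // hj hr.
have [m [c [/andP[hm hmk] hc ->]]] := min_label_is_label hj.
have [[|c'] + e] // := label_truncation yTT (ltnW (leq_trans hr hm)) hmk hc.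
  by rewrite (ell_take e) ?(ltnW (leq_trans hr hm)).
by rewrite ell_block_eq1 ?(ltn_eqF hr) ?(ltnW (leq_trans hr mD_le_k)).
Qed.

Lemma ell_mu_lt_mD r : r < mD y -> ell (mu y) r = ell (E y r 0) r.
Proof.
case: r => [|r] // hr; have hrk := ltnW (leq_trans hr mD_le_k).
by rewrite ell_mu ?dimd_block // ell_block_eq1 ?(ltn_eqF hr) //= addn0.
Qed.

Lemma ell_mu_gt_mD r : mD y < r <= k -> ell (mu y) r = 1.
Proof.
move=> hr; have hr0 : 0 < r by case: r hr.
rewrite ell_mu ?dimd_block ?hr0 ?(andP hr).2 //.
by rewrite ell_block_gt_mD //= addn0 ell_label_gt_mD.
Qed.

Lemma ell_mu_mD : 1 < ell (mu y) (mD y).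
Proof.
rewrite ell_mu ?dimd_block ?mD_le_k //.
have /all_pred1P -> :
    all (pred1 1) [seq ell (E y (mD y) c) (mD y) | c <- iota 0 (ell y (mD y))].
  apply/allP => x /mapP[c]; rewrite mem_iota => /andP[_ hc] ->.
  exact/eqP/ell_label_mD.
by rewrite sumn_nseq size_map size_iota mul1n ell_block_gt1.
Qed.

Lemma H_min_label j : j < ell y (mD y) ->
  H (min_label y j) = count (fun r => 1 < ell (E y r 0) r) (iota 1 (mD y).-1).
Proof.
move=> hj; have [m [c [/andP[hm hmk] hc e]]] := min_label_is_label hj.
have hdim : mD y <= dimd (min_label y j) by rewrite e (dimd_label yTT).
rewrite (@H_count_ell_le _ _ (mD y).-1); first last.
- by move=> r /andP[hr hrd]; rewrite ell_min_label_ge_mD ?hrd ?andbT.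
- exact: leq_trans (leq_pred _) hdim.
apply: eq_in_count => r; rewrite mem_iota add1n => /andP[_ hr].
by rewrite ell_min_label_lt_mD.
Qed.

Lemma H_mu :
  H (mu y) = (count (fun r => 1 < ell (E y r 0) r) (iota 1 (mD y).-1)).+1.
Proof.
rewrite (@H_count_ell_le _ _ (mD y)); first last.
- by move=> r; rewrite dimd_mu dimd_block => hr; rewrite ell_mu_gt_mD.
- by rewrite dimd_mu dimd_block mD_le_k.
have -> : iota 1 (mD y) = iota 1 (mD y).-1 ++ [:: mD y].
  by rewrite -{1}(@prednK (mD y)) // -(addn1 (mD y).-1) iotaD add1n.
rewrite count_cat [count _ [:: mD y]]/= ell_mu_mD addn1.
congr _.+1; apply: eq_in_count => r; rewrite mem_iota add1n => /andP[_ hr].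
by rewrite ell_mu_lt_mD.
Qed.

End BlockLabels.

Theorem mainTheorem7 (X : preglob) (n k : nat) (y : ldiag (TX X)) :
  globular X -> k <= n -> validTT k y -> is_block y ->
  (forall j, j < ell y (mD y) ->
     nontrivial (min_label y j) /\ MD (min_label y j) < mD y) ->
  forall j, j < ell y (mD y) -> H (min_label y j) = H (mu y) - 1.
Proof.
move=> _ _ yTT y_block min_label_small j hj.
by rewrite (H_min_label yTT y_block min_label_small hj)
  (H_mu yTT y_block min_label_small) subn1.
Qed.
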